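(* Let $G$ be a finite group of order $n$ and $S\subseteq G\setminus\{1\}$ an inverse-closed normal subset such that $\Gamma=\operatorname{Cay}(G,S)$ is connected with diameter $d$. For $1\le i\le d$ let $S_i$ be the set of vertices at distance exactly $i$ from the vertex $1$, and let $H'=\{h\in\mathbb{Z}_n^*\mid S_i^h=S_i\text{ for all }1\le i\le d\}$. Then the distance splitting field of $\Gamma$ is $$\mathbb{SF}_D(\Gamma)=\mathbb{Q}(\zeta_n)^{\eta^{-1}(H')}=\{x\in\mathbb{Q}(\zeta_n)\mid \sigma(x)=x\text{ for all }\sigma\in\eta^{-1}(H')\},$$ and the distance algebraic degree is $\operatorname{Deg}_D(\Gamma)=\varphi(n)/|H'|$. In particular, $\Gamma$ is distance integral if and only if $S_i^h=S_i$ for all $1\le i\le d$ and all $h\in\mathbb{Z}_n^*$.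
   Context: $S$ normal means $gSg^{-1}=S$ for all $g\in G$. The Cayley graph $\operatorname{Cay}(G,S)$ has vertex set $G$ with $u\sim v$ iff $uv^{-1}\in S$. Its distance matrix $D(\Gamma)$ has $(u,v)$-entry the graph distance $d_\Gamma(u,v)$; $\mathbb{SF}_D(\Gamma)$ is the smallest subfield of $\mathbb{C}$ containing all eigenvalues of $D(\Gamma)$, $\operatorname{Deg}_D(\Gamma)=[\mathbb{SF}_D(\Gamma):\mathbb{Q}]$, and distance integral means all eigenvalues of $D(\Gamma)$ are integers. $\zeta_n=e^{2\pi i/n}$; $\eta:\operatorname{Gal}(\mathbb{Q}(\zeta_n)/\mathbb{Q})\to\mathbb{Z}_n^*$ is the isomorphism with $\sigma(\zeta_n)=\zeta_n^{\eta(\sigma)}$; $S_i^h=\{s^h\mid s\in S_i\}$; $\varphi$ is Euler's totient. *)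

From HB Require Import structures.
From mathcomp Require Import all_boot all_order all_fingroup all_algebra all_solvable all_field.
Set Implicit Arguments. Unset Strict Implicit. Unset Printing Implicit Defensive.
Import Order.TTheory GRing.Theory Num.Theory.

Section Cayley.
Variable gT : finGroupType.
Local Open Scope group_scope.

Definition cayrel (S : {set gT}) : rel gT := fun u v => u * v^-1 \in S.

Definition ball (S : {set gT}) (u : gT) (k : nat) : {set gT} :=
  iter k (fun B => B :|: [set y | [exists x in B, cayrel S x y]]) [set u].

(* Graph distance: least k with v within distance k of u (paths have length
   < #|gT|; the value #|gT|.+1 only arises for unreachable vertices, which
   never happens under the connectedness hypothesis). *)
Definition cdist (S : {set gT}) (u v : gT) : nat :=
  find (fun k => v \in ball S u k) (iota 0 #|gT|.+1).

Definition cay_connected (G : {group gT}) (S : {set gT}) : Prop :=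
  forall u v, u \in G -> v \in G -> connect (cayrel S) u v.

Definition diam (G : {group gT}) (S : {set gT}) : nat :=
  \max_(u in G) \max_(v in G) cdist S u v.

Definition Sdist (G : {group gT}) (S : {set gT}) (i : nat) : {set gT} :=
  [set v in G | cdist S 1 v == i].

Definition powset (A : {set gT}) (h : nat) : {set gT} := [set a ^+ h | a in A].

Definition dist_mx (G : {group gT}) (S : {set gT}) : 'M[algC]_(#|G|) :=
  \matrix_(i, j) ((cdist S (enum_val i) (enum_val j))%:R)%R.

End Cayley.

Local Open Scope ring_scope.

Definition is_subfield (K : algC -> Prop) : Prop :=
  [/\ K 0, K 1, (forall x y, K x -> K y -> K (x - y) /\ K (x * y))
    & (forall x, K x -> x != 0 -> K x^-1)].

Definition field_gen (A : algC -> Prop) (x : algC) : Prop :=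
  forall K, is_subfield K -> (forall a, A a -> K a) -> K x.

Definition Qdim (K : algC -> Prop) (k : nat) : Prop :=
  exists b : 'I_k -> algC,
    [/\ forall i, K (b i),
        (forall c : 'I_k -> rat, \sum_i ratr (c i) * b i = 0 -> forall i, c i = 0)
      & (forall x, K x -> exists c : 'I_k -> rat, x = \sum_i ratr (c i) * b i)].

Definition SF_D (gT : finGroupType) (G : {group gT}) (S : {set gT}) : algC -> Prop :=
  field_gen (fun a => eigenvalue (dist_mx G S) a).

Definition distance_integral (gT : finGroupType) (G : {group gT}) (S : {set gT}) : Prop :=
  forall a, eigenvalue (dist_mx G S) a -> a \is a Num.int.

From HB Require Import structures.
From mathcomp Require Import all_boot all_order all_fingroup all_algebra all_solvable all_field all_character.
From mathcomp Require Import ring.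
Set Implicit Arguments. Unset Strict Implicit. Unset Printing Implicit Defensive.
Import Order.TTheory GRing.Theory Num.Theory.

(* Normality of S makes f(x) := d(1, x) a class function, so the distance
   matrix is the image of the central element sum_x f(x) x of the group algebra
   in the regular representation. Its eigenvalues are the central character
   values omega_chi = chi(1)^-1 sum_x f(x) chi(x), which lie in Q(zeta_n).
   The automorphism zeta |-> zeta^h sends omega_chi to
   chi(1)^-1 sum_x f(x) chi(x^h), so by column orthogonality it fixes every
   omega_chi iff f(x^h) = f(x) for all x, i.e. iff S_i^h = S_i for all i.
   The Galois correspondence for Q(zeta_n) then identifies SF_D with the fixed
   field of H', and an algebraic integer fixed by the whole Galois group is an
   integer. *)

Section CayleyDistance.
Variable gT : finGroupType.
Local Open Scope group_scope.
Implicit Types (S : {set gT}) (u v : gT).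

Lemma ballS S u k :
  ball S u k.+1 = ball S u k :|: [set y | [exists x in ball S u k, cayrel S x y]].
Proof. by rewrite /ball iterS. Qed.

Lemma ball_morph S (phi psi : gT -> gT) :
  cancel phi psi -> cancel psi phi ->
  (forall x y, cayrel S (phi x) (phi y) = cayrel S x y) ->
  forall u k v, (phi v \in ball S (phi u) k) = (v \in ball S u k).
Proof.
move=> phiK psiK phi_rel u; elim=> [|k IHk] v.
  by rewrite /ball /= !in_set1 (inj_eq (can_inj phiK)).
rewrite !ballS !in_setU !in_set IHk; congr (_ || _).
apply/existsP/existsP => -[x /andP[Bx xv]].
  by exists (psi x); rewrite -IHk psiK Bx -phi_rel psiK.
by exists (phi x); rewrite IHk Bx phi_rel.
Qed.

Lemma cdist_morph S (phi psi : gT -> gT) :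
  cancel phi psi -> cancel psi phi ->
  (forall x y, cayrel S (phi x) (phi y) = cayrel S x y) ->
  forall u v, cdist S (phi u) (phi v) = cdist S u v.
Proof. by move=> phiK psiK phi_rel u v; apply: eq_find => k; apply: ball_morph. Qed.

Lemma cdist_transl S u v : cdist S u v = cdist S 1 (v * u^-1).
Proof.
rewrite -(mulgV u) (@cdist_morph S (fun x => x * u^-1) (fun x => x * u)) //.
- by move=> x; rewrite mulgKV.
- by move=> x; rewrite mulgK.
by move=> x y; rewrite /cayrel invMg invgK mulgA mulgKV.
Qed.

Lemma cdist1_conj (G : {group gT}) S g v :
  (forall g, g \in G -> S :^ g = S) -> g \in G ->
  cdist S 1 (v ^ g) = cdist S 1 v.
Proof.
move=> nSG Gg; rewrite -{1}(conj1g g).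
apply: (@cdist_morph S (fun x => x ^ g) (fun x => x ^ g^-1)).
- by move=> x; rewrite conjgK.
- by move=> x; rewrite conjgKV.
by move=> x y; rewrite /cayrel -conjVg -conjMg -{1}(nSG g Gg) memJ_conjg.
Qed.

Lemma cdist1_eq0 S v : (cdist S 1 v == 0)%N = (v == 1).
Proof. by rewrite /cdist /= /ball /= in_set1; case: (v == 1). Qed.

Lemma cdist1_le_diam (G : {group gT}) S v : v \in G -> (cdist S 1 v <= diam G S)%N.
Proof.
move=> Gv; apply: leq_trans (leq_bigmax_cond _ (group1 G)).
exact: (@leq_bigmax_cond _ (mem G) (cdist S 1) _ Gv).
Qed.

End CayleyDistance.

Section DistancePowers.
Variable gT : finGroupType.
Local Open Scope group_scope.
Variables (G : {group gT}) (S : {set gT}).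

Definition dist_stable (h : nat) : Prop :=
  forall y, y \in G -> cdist S 1 (y ^+ h) = cdist S 1 y.

Lemma expg_invnKV k :
  coprime #|G| k -> {in G, cancel (natexp^~ (expg_invn G k)) (natexp^~ k)}.
Proof. by move=> coGk x Gx; rewrite /= -expgM mulnC expgM expgK. Qed.

Lemma Sdist_expg_stable h :
  coprime h #|G| ->
  (forall i, (1 <= i <= diam G S)%N -> powset (Sdist G S i) h = Sdist G S i) <->
  dist_stable h.
Proof.
rewrite coprime_sym => coGh; split=> [SiJ y Gy | stab_h i _].
  have [-> | ny1] := eqVneq y 1; first by rewrite expg1n.
  have dy : (1 <= cdist S 1 y <= diam G S)%N.
    by rewrite lt0n cdist1_eq0 ny1 cdist1_le_diam.
  have : y ^+ h \in powset (Sdist G S (cdist S 1 y)) h.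
    by apply: imset_f; rewrite inE Gy eqxx.
  by rewrite SiJ // inE => /andP[_ /eqP].
apply/setP => y; apply/imsetP/idP.
  by case=> a; rewrite !inE => /andP[Ga /eqP <-] ->; rewrite groupX // (stab_h a Ga) eqxx.
rewrite inE => /andP[Gy /eqP <-]; exists (y ^+ expg_invn G h).
  by rewrite inE groupX //= -(stab_h _ (groupX _ Gy)) expg_invnKV.
by rewrite expg_invnKV.
Qed.

Lemma in_Sdist_stabilizer (h : 'I_#|G|) :
  h \in [set h : 'I_#|G| | coprime h #|G| &&
          [forall i : 'I_(diam G S).+1,
             (0 < i)%N ==> (powset (Sdist G S i) h == Sdist G S i)]]
  <-> coprime h #|G| /\ dist_stable h.
Proof.
rewrite inE.
have [coGh | ncoGh] /= := boolP (coprime h #|G|); last by split=> // -[].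
have [stabE Sdist_stab] := Sdist_expg_stable coGh.
split=> [/forallP SiJ | [_ /Sdist_stab SiJ]].
  split=> //; apply: stabE => i /andP[i_gt0 le_id].
  by have := SiJ (Ordinal (le_id : (i < (diam G S).+1)%N)); rewrite /= i_gt0 => /eqP.
apply/forallP => i; apply/implyP => i_gt0.
by apply/eqP; apply: SiJ; rewrite i_gt0 -ltnS ltn_ord.
Qed.

End DistancePowers.

Local Open Scope ring_scope.

Section ClassFunctions.
Variables (gT : finGroupType) (G : {group gT}).

Lemma class_fun_inversion (g : gT -> algC) x :
  (forall y c, y \in G -> c \in G -> g (y ^ c)%g = g y) -> x \in G ->
  \sum_i (\sum_(y in G) g y * 'chi[G]_i y) * ('chi_i x)^* = #|G|%:R * g x.
Proof.
move=> gJ Gx.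
transitivity (\sum_(y in G) g y * (#|'C_G[y]%g|%:R *+ (y \in x ^: G)%g)).
  under eq_bigr do rewrite mulr_suml.
  rewrite exchange_big /=; apply: eq_bigr => y Gy.
  rewrite -second_orthogonality_relation // mulr_sumr.
  by apply: eq_bigr => i _; rewrite mulrA.
have sxG : (x ^: G)%g \subset G by rewrite class_subG.
have nxG : #|(x ^: G)%g|%:R != 0 :> algC.
  by rewrite pnatr_eq0 -lt0n card_gt0; apply/set0Pn; exists x; apply: class_refl.
have cardC y : y \in (x ^: G)%g -> #|'C_G[y]%g|%:R = #|G|%:R / #|(x ^: G)%g|%:R :> algC.
  move=> /class_eqP <-; rewrite -index_cent1 -(Lagrange (subsetIl G 'C[y]%g)).
  by rewrite natrM mulfK // pnatr_eq0 -lt0n indexg_gt0.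
rewrite (big_setID (x ^: G)%g) /= (setIidPr sxG) [X in _ + X]big1 ?addr0; last first.
  by move=> y /setDP[_ /negbTE ->]; rewrite mulr0.
rewrite (eq_bigr (fun _ => g x * (#|G|%:R / #|(x ^: G)%g|%:R))); last first.
  move=> y yx; rewrite yx mulr1n cardC //.
  by case/imsetP: yx => c Gc ->; rewrite gJ.
by rewrite sumr_const -mulrnAr -mulr_natr divfK // mulrC.
Qed.

Lemma class_fun_eq0 (g : gT -> algC) :
  (forall y c, y \in G -> c \in G -> g (y ^ c)%g = g y) ->
  (forall i : Iirr G, \sum_(y in G) g y * 'chi_i y = 0) ->
  forall x, x \in G -> g x = 0.
Proof.
move=> gJ g_perp x Gx; have := class_fun_inversion gJ Gx.
rewrite big1 => [/esym/eqP | i _]; last by rewrite g_perp mul0r.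
by rewrite mulf_eq0 (negbTE (neq0CG G)) => /eqP.
Qed.

Lemma sum_expg_coprime (F : gT -> algC) k : coprime #|G| k ->
  \sum_(x in G) F (x ^+ k)%g = \sum_(x in G) F x.
Proof.
move=> coGk; have expk_inj : {in G &, injective (fun x => (x ^+ k)%g)}.
  exact: can_in_inj (expgK coGk).
rewrite -(big_imset F expk_inj) /=; apply: eq_bigl => y.
apply/imsetP/idP => [[x Gx ->] | Gy]; first by rewrite groupX.
by exists (y ^+ expg_invn G k)%g; rewrite ?groupX ?expg_invnKV.
Qed.

Lemma rmorph_irr_expg (u : {rmorphism algC -> algC}) h i x :
  (forall e, e ^+ #|G| = 1 -> u e = e ^+ h) -> x \in G ->
  u ('chi[G]_i x) = 'chi_i (x ^+ h)%g.
Proof.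
move=> uE Gx; pose C := <[x]>%G.
have sCG : C \subset G by rewrite cycle_subG.
have Cx : x \in C by apply: cycle_id.
have [r Res_chi] := char_sum_irr (cfRes_char C (irr_char i)).
rewrite -(cfResE _ sCG Cx) -(cfResE _ sCG (mem_cycle x h)).
rewrite Res_chi !sum_cfunE rmorph_sum; apply: eq_bigr => j _.
have lin_j : 'chi[C]_j \is a linear_char by apply/irr_cyclic_lin/cycle_cyclic.
rewrite (lin_charX lin_j _ Cx) uE // -(lin_charX lin_j _ Cx).
by rewrite expg_cardG // lin_char1.
Qed.

End ClassFunctions.

Section DistanceSpectrum.
Variables (gT : finGroupType) (G : {group gT}) (S : {set gT}).
Hypothesis nSG : forall g, g \in G -> (S :^ g)%g = S.

Definition dist1 (x : gT) : algC := (cdist S 1 x)%:R.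

Definition dist_eigval (i : Iirr G) : algC :=
  ('chi[G]_i 1%g)^-1 * \sum_(x in G) dist1 x * 'chi_i x.

Lemma dist1J x g : g \in G -> dist1 (x ^ g)%g = dist1 x.
Proof. by move=> Gg; rewrite /dist1 (cdist1_conj _ nSG Gg). Qed.

Let aG := regular_repr algC G.
Let E (i : Iirr G) := Wedderburn_id (socle_of_Iirr i).
Let pcharG := algC'G_pchar G.

Lemma dist_mx_regular : dist_mx G S = \sum_(x in G) dist1 x *: aG x.
Proof.
apply/matrixP => i j; rewrite !mxE summxE.
set u := enum_val i; set v := enum_val j.
have Gu : u \in G by apply: enum_valP.
have Gv : v \in G by apply: enum_valP.
rewrite (bigD1 (u^-1 * v)%g) /=; last by rewrite groupM ?groupV.
rewrite big1 ?addr0 => [|x /andP[Gx ne_x]].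
  rewrite mxE /regular_mx mxE -/u mulKVg /v gring_valK mxE !eqxx mulr1.
  rewrite /dist1 cdist_transl -(cdist1_conj _ nSG Gu).
  by rewrite conjgE !mulgA mulgKV.
rewrite mxE /regular_mx !mxE -/u eqxx /=; case: eqP => [j_ux | _]; last by rewrite mulr0.
have v_ux : v = (u * x)%g by rewrite /v j_ux gring_indexK // groupM.
by move: ne_x; rewrite v_ux mulKg eqxx.
Qed.

Lemma regular_Wedderburn_expansion :
  \sum_(x in G) dist1 x *: aG x = \sum_i dist_eigval i *: E i.
Proof.
symmetry; transitivity (\sum_i \sum_(x in G)
   (dist_eigval i / #|G|%:R * ('chi_i 1%g * 'chi_i x^-1%g)) *: aG x).
  apply: eq_bigr => i _; rewrite /E Wedderburn_id_expansion !scaler_sumr.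
  by apply: eq_bigr => x _; rewrite !scalerA.
rewrite exchange_big /=; apply: eq_bigr => x Gx; rewrite -scaler_suml.
congr (_ *: _); apply: (mulfI (neq0CG G)).
rewrite -(class_fun_inversion (fun y c _ => @dist1J y c)) // mulr_sumr.
apply: eq_bigr => i _; rewrite /dist_eigval irr_inv.
have := irr1_neq0 i; have := neq0CG G; move: ('chi_i 1%g) => c nG nc.
by field; rewrite nG nc.
Qed.

Lemma Wedderburn_id_neq0 i : E i != 0.
Proof. by have [] := Wedderburn_is_id_pchar pcharG (socle_of_Iirr i). Qed.

Lemma Wedderburn_idM i j : E i *m E j = if i == j then E i else 0.
Proof.
have [<- | ne_ij] := eqVneq i j.
  by have [_ E_mem idE _] := Wedderburn_is_id_pchar pcharG (socle_of_Iirr i); rewrite idE.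
apply: (@Wedderburn_mulmx0 _ _ _ _ (socle_of_Iirr i) (socle_of_Iirr j)).
- by rewrite (can_eq (@socle_of_IirrK _ G)).
- exact: Wedderburn_id_mem.
exact: Wedderburn_id_mem.
Qed.

Lemma sum_Wedderburn_id : \sum_i E i = 1%:M.
Proof.
rewrite -(Wedderburn_sum_id_pchar (DecSocleType (regular_repr algC G)) pcharG).
by rewrite (reindex _ (socle_of_Iirr_bij _)).
Qed.

Let D := \sum_i dist_eigval i *: E i.

Lemma mulmx_Wedderburn_id j : D *m E j = dist_eigval j *: E j.
Proof.
rewrite /D mulmx_suml (bigD1 j) //= -scalemxAl Wedderburn_idM eqxx big1 ?addr0 // => i ne_ij.
by rewrite -scalemxAl Wedderburn_idM (negbTE ne_ij) scaler0.
Qed.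

Lemma Wedderburn_id_mulmx j : E j *m D = dist_eigval j *: E j.
Proof.
rewrite /D mulmx_sumr (bigD1 j) //= -scalemxAr Wedderburn_idM eqxx big1 ?addr0 // => i ne_ij.
by rewrite -scalemxAr Wedderburn_idM eq_sym (negbTE ne_ij) scaler0.
Qed.

Lemma eigenvalue_dist_mx a : eigenvalue (dist_mx G S) a <-> exists i, a = dist_eigval i.
Proof.
rewrite dist_mx_regular regular_Wedderburn_expansion -/D; split.
  case/eigenvalueP => v vD nz_v.
  have [j nz_vE] : exists j, v *m E j != 0.
    apply/existsP; apply: contraR nz_v => /existsPn vE0.
    rewrite -[v]mulmx1 -sum_Wedderburn_id mulmx_sumr big1 // => j _.
    exact/eqP/negbNE/vE0.
  exists j; apply/eqP; rewrite -subr_eq0.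
  have : (a - dist_eigval j) *: (v *m E j) = 0.
    rewrite scalerBl scalemxAl -vD -mulmxA mulmx_Wedderburn_id -scalemxAr.
    exact: subrr.
  by move/eqP; rewrite scaler_eq0 (negbTE nz_vE) orbF.
case=> j ->; apply/eigenvalueP.
have [r nz_r] : exists r, row r (E j) != 0.
  apply/existsP; apply: contraR (Wedderburn_id_neq0 j) => /existsPn rows0.
  by apply/eqP/row_matrixP => r; rewrite row0; apply/eqP/negbNE/rows0.
by exists (row r (E j)); rewrite // -row_mul Wedderburn_id_mulmx linearZ.
Qed.

Lemma rmorph_dist_eigval (u : {rmorphism algC -> algC}) h i :
  (forall e, e ^+ #|G| = 1 -> u e = e ^+ h) ->
  u (dist_eigval i) = ('chi_i 1%g)^-1 * \sum_(x in G) dist1 x * 'chi_i (x ^+ h)%g.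
Proof.
move=> uE; rewrite /dist_eigval rmorphM fmorphV irr1_degree rmorph_nat rmorph_sum.
congr (_ * _); apply: eq_bigr => x Gx.
by rewrite rmorphM rmorph_nat (rmorph_irr_expg _ uE Gx).
Qed.

(* Fixing every eigenvalue makes the class function
   [x |-> dist1 (x ^+ h^-1) - dist1 x] orthogonal to all irreducible
   characters, so it vanishes by column orthogonality. *)
Lemma dist_eigval_fixed (u : {rmorphism algC -> algC}) h :
  coprime h #|G| -> (forall e, e ^+ #|G| = 1 -> u e = e ^+ h) ->
  (forall i, u (dist_eigval i) = dist_eigval i) <-> dist_stable G S h.
Proof.
rewrite coprime_sym => coGh uE; split=> [fixed | stab i]; last first.
  rewrite (rmorph_dist_eigval _ uE); congr (_ * _).
  rewrite -(sum_expg_coprime (fun y => dist1 y * 'chi_i y) coGh).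
  by apply: eq_bigr => x Gx; rewrite /dist1 stab.
pose k := expg_invn G h; pose g x := dist1 (x ^+ k)%g - dist1 x.
have gJ y c : y \in G -> c \in G -> g (y ^ c)%g = g y.
  by move=> _ Gc; rewrite /g -conjXg !dist1J.
have g_perp (i : Iirr G) : \sum_(y in G) g y * 'chi_i y = 0.
  have := fixed i; rewrite (rmorph_dist_eigval _ uE) => /(mulfI (invr_neq0 (irr1_neq0 i))).
  rewrite (eq_bigr (fun x => dist1 (x ^+ h ^+ k)%g * 'chi_i (x ^+ h)%g)); last first.
    by move=> x Gx; rewrite expgK.
  rewrite (sum_expg_coprime (fun y => dist1 (y ^+ k)%g * 'chi_i y) coGh).
  by move=> eq_sums; rewrite (eq_bigr _ (fun x _ => mulrBl _ _ _)) sumrB eq_sums subrr.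
move=> y Gy; apply/eqP; rewrite -(eqr_nat algC) -!/(dist1 _).
have /eqP := class_fun_eq0 gJ g_perp (groupX h Gy).
by rewrite /g expgK // subr_eq0 => /eqP ->.
Qed.

End DistanceSpectrum.

Section Subfield.
Variable K : algC -> Prop.
Hypothesis sfK : is_subfield K.

Lemma subfield0 : K 0. Proof. by case: sfK. Qed.
Lemma subfield1 : K 1. Proof. by case: sfK. Qed.

Lemma subfieldB x y : K x -> K y -> K (x - y).
Proof. by case: sfK => _ _ closedK _ /closedK Kx /Kx[]. Qed.

Lemma subfieldM x y : K x -> K y -> K (x * y).
Proof. by case: sfK => _ _ closedK _ /closedK Kx /Kx[]. Qed.

Lemma subfieldV x : K x -> K x^-1.
Proof.
case: sfK => K0 _ _ invK Kx; have [-> | nz_x] := eqVneq x 0; last exact: invK.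
by rewrite invr0.
Qed.

Lemma subfieldN x : K x -> K (- x).
Proof. by move=> Kx; rewrite -sub0r; apply: subfieldB => //; apply: subfield0. Qed.

Lemma subfieldD x y : K x -> K y -> K (x + y).
Proof. by move=> Kx Ky; rewrite -[y]opprK; apply: subfieldB => //; apply: subfieldN. Qed.

Lemma subfieldX x n : K x -> K (x ^+ n).
Proof.
move=> Kx; elim: n => [|n IHn]; first by rewrite expr0; apply: subfield1.
by rewrite exprS; apply: subfieldM.
Qed.

Lemma subfield_nat n : K n%:R.
Proof.
elim: n => [|n IHn]; first exact: subfield0.
by rewrite -addn1 natrD; apply: subfieldD => //; apply: subfield1.
Qed.

Lemma subfield_rat (q : rat) : K (ratr q).
Proof.
have Kint (m : int) : K m%:~R.
  case: m => m; first exact: subfield_nat.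
  by rewrite NegzE mulrNz; apply: subfieldN; apply: subfield_nat.
by apply: subfieldM; [|apply: subfieldV]; apply: Kint.
Qed.

Lemma subfield_sum (I : Type) (r : seq I) (P : pred I) (F : I -> algC) :
  (forall i, P i -> K (F i)) -> K (\sum_(i <- r | P i) F i).
Proof. by move=> KF; apply: (big_ind K) => //; [apply: subfield0 | apply: subfieldD]. Qed.

End Subfield.

Lemma field_gen_min (A K : algC -> Prop) x :
  is_subfield K -> (forall a, A a -> K a) -> field_gen A x -> K x.
Proof. by move=> sfK AK /(_ K sfK AK). Qed.

Lemma field_gen_in (A : algC -> Prop) x : A x -> field_gen A x.
Proof. by move=> Ax K _ /(_ x Ax). Qed.

Lemma field_gen_subfield (A : algC -> Prop) : is_subfield (field_gen A).
Proof.
split=> [K sfK _ | K sfK _ | x y Ax Ay | x Ax _ K sfK AK].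
- exact: subfield0.
- exact: subfield1.
- split=> K sfK AK; have Kx := Ax K sfK AK; have Ky := Ay K sfK AK.
    exact: subfieldB.
  exact: subfieldM.
by apply: (subfieldV sfK); apply: Ax.
Qed.

Section NumFieldImage.
Variables (L : fieldExtType rat) (LtoC : {rmorphism L -> algC}).

Definition img (E : {vspace L}) (x : algC) : Prop := exists2 y, y \in E & x = LtoC y.

Lemma img_subfield (E : {subfield L}) : is_subfield (img E).
Proof.
split.
- by exists 0; rewrite ?mem0v ?rmorph0.
- by exists 1; rewrite ?mem1v ?rmorph1.
- move=> _ _ [a Ea ->] [b Eb ->]; split.
    by exists (a - b); rewrite ?rmorphB ?rpredB.
  by exists (a * b); rewrite ?rmorphM ?rpredM.
by move=> _ [a Ea ->] _; exists a^-1; rewrite ?fmorphV ?memvV.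
Qed.

Lemma img_adjoin_seq (K : algC -> Prop) (s : seq L) y :
  is_subfield K -> (forall a, a \in s -> K (LtoC a)) ->
  y \in <<1 & s>>%VS -> K (LtoC y).
Proof.
move=> sfK; elim/last_ind: s y => [|s a IHs] y Ks.
  rewrite (Fadjoin_nil 1%AS) => /vlineP[q ->].
  by rewrite rmorphZ_num rmorph1 mulr1; apply: subfield_rat.
rewrite adjoin_rcons => /Fadjoin_polyP[p Pp ->].
rewrite -horner_map horner_coef; apply: subfield_sum => // i _.
apply: subfieldM => //; last by apply: subfieldX => //; apply: Ks; rewrite mem_rcons mem_head.
rewrite coef_map; apply: IHs; last exact: polyOverP.
by move=> b sb; apply: Ks; rewrite mem_rcons inE sb orbT.
Qed.

End NumFieldImage.

Lemma rmorph_unity_root (u : {rmorphism algC -> algC}) n z h :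
  n.-primitive_root z -> u z = z ^+ h -> forall e, e ^+ n = 1 -> u e = e ^+ h.
Proof.
move=> prim_z uz e /(prim_rootP prim_z)[k ->].
by rewrite rmorphXn uz -!exprM mulnC.
Qed.

Lemma eigenvalue_dist_mx_Aint (gT : finGroupType) (G : {group gT}) (S : {set gT}) a :
  eigenvalue (dist_mx G S) a -> a \in Aint.
Proof.
have -> : dist_mx G S = map_mx intr
    (\matrix_(i, j) (cdist S (enum_val i) (enum_val j))%:Z : 'M[int]_#|G|).
  by apply/matrixP => i j; rewrite !mxE.
rewrite eigenvalue_root_char -map_char_poly => /root_monic_Aint; apply.
  exact/monic_map/char_poly_monic.
by apply/polyOverP => k; rewrite coef_map intr_int.
Qed.

Lemma dist_eigval_num_field (gT : finGroupType) (G : {group gT}) (S : {set gT})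
    (L : fieldExtType rat) (LtoC : {rmorphism L -> algC}) :
  (forall (i : Iirr G) x, x \in G -> {a | LtoC a = 'chi_i x}) ->
  exists eig : Iirr G -> L, forall i, LtoC (eig i) = dist_eigval S i.
Proof.
move=> chiL; have sfL := img_subfield LtoC {:L}%AS.
have eigL (i : Iirr G) : exists a, LtoC a == dist_eigval S i.
  suff [a _ ->] : img LtoC fullv (dist_eigval S i) by exists a.
  apply: subfieldM => //; first by apply: (subfieldV sfL); rewrite irr1_degree; apply: subfield_nat.
  apply: subfield_sum => // x Gx; apply: subfieldM => //; first exact: subfield_nat.
  by have [a <-] := chiL i x Gx; exists a; rewrite ?memvf.
by exists (fun i => xchoose (eigL i)) => i; apply/eqP/(xchooseP (eigL i)).
Qed.

Section CyclotomicGalois.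
Variables (gT : finGroupType) (G : {group gT}) (S : {set gT}).
Hypothesis nSG : forall g, g \in G -> (S :^ g)%g = S.
Local Notation n := #|G|.
Variables (Qn : splittingFieldType rat) (QnC : {rmorphism Qn -> algC}) (w : Qn).
Hypothesis galQn : galois 1 {:Qn}.
Hypothesis liftQn : forall sg : argumentType [in 'Gal({:Qn} / 1)%g],
  {nu : {rmorphism algC -> algC} | {morph QnC : a / sg a >-> nu a}}.
Hypotheses (prim_w : n.-primitive_root w) (genQn : <<1; w>>%VS = fullv).
Variable eig : Iirr G -> Qn.
Hypothesis eigE : forall i, QnC (eig i) = dist_eigval S i.

Let F := <<1 & [seq eig i | i <- enum (Iirr G)]>>%AS.

Let galois_eig_field : galois F fullv.
Proof. by apply: (galoisS _ galQn); rewrite subvf andbT; apply: subv_adjoin_seq. Qed.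

Let prim_QnC_w : n.-primitive_root (QnC w).
Proof. by rewrite fmorph_primitive_root. Qed.

Lemma gal_unity_exp (sg : gal_of {:Qn}) : exists2 h : 'I_n, sg w = w ^+ h & coprime h n.
Proof.
have prim_sg_w : n.-primitive_root (sg w) by rewrite fmorph_primitive_root.
have [h sg_w] := prim_rootP prim_w (prim_expr_order prim_sg_w).
by exists h; rewrite // -(prim_root_exp_coprime _ prim_w) -sg_w.
Qed.

Lemma gal_unity_exp_exists h : coprime h n -> exists sg : gal_of {:Qn}, sg w = w ^+ h.
Proof.
move=> coh; have [nuC nuCE] := Qn_aut_exists coh.
have [nuQ nuQE] := restrict_aut_to_normal_num_field QnC nuC.
have hom_nuQ : kHom 1 {:Qn} (linfun nuQ).
  rewrite k1HomE; apply/ahom_inP.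
  by split=> [u v | ]; rewrite !lfunE ?rmorphM ?rmorph1.
have [|sg _ sgE] := kHom_to_gal _ (normalFieldf 1) hom_nuQ; first by rewrite !subvf.
exists sg; apply: (fmorph_inj QnC).
rewrite -sgE ?memvf // lfunE nuQE rmorphXn nuCE //.
by rewrite prim_expr_order // fmorph_primitive_root.
Qed.

Lemma gal_eq_unity (sg tg : gal_of {:Qn}) : sg w = tg w -> sg = tg.
Proof.
move=> eq_w; apply/eqP/gal_eqP => y _.
have : y \in <<1; w>>%VS by rewrite genQn memvf.
case/Fadjoin_polyP => p Qp ->; rewrite -!horner_map.
have Gal1 (x : gal_of {:Qn}) : x \in 'Gal({:Qn} / 1)%g.
  by rewrite gal_kHom ?sub1v // k1HomE; apply: ahomWin.
by rewrite !(fixedPoly_gal (sub1v _) (Gal1 _) Qp) /= eq_w.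
Qed.

Lemma lift_unity_exp (sg : gal_of {:Qn}) (nu : {rmorphism algC -> algC}) h :
  sg w = w ^+ h -> {morph QnC : a / sg a >-> nu a} ->
  forall e, e ^+ n = 1 -> nu e = e ^+ h.
Proof.
move=> sg_w nuE; apply: (rmorph_unity_root prim_QnC_w).
by rewrite -nuE sg_w rmorphXn.
Qed.

Lemma rmorph_eq_on_Qn (u1 u2 : {rmorphism algC -> algC}) :
  u1 (QnC w) = u2 (QnC w) -> forall y, u1 (QnC y) = u2 (QnC y).
Proof.
move=> eq_w y; have : y \in <<1; w>>%VS by rewrite genQn memvf.
case/Fadjoin_polyP => p Qp ->; rewrite -!horner_map /= -!map_poly_comp.
by rewrite !map_Qnum_poly // eq_w.
Qed.

Lemma mem_Gal_eig (sg : gal_of {:Qn}) :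
  sg \in 'Gal({:Qn} / F)%g <-> forall i, sg (eig i) = eig i.
Proof.
have := galois_connection [set sg] (subvf F); rewrite sub1set => ->.
split=> [/Fadjoin_seqP[_ fixed_eig] i | fixed_eig].
  have : eig i \in fixedField [set sg].
    by apply: fixed_eig; apply/mapP; exists i; rewrite ?mem_enum.
  by move/mem_fixedFieldP => [_ ->]; rewrite ?set11.
apply/Fadjoin_seqP; split; first exact: sub1v.
move=> _ /mapP[i _ ->]; apply/fixedFieldP; first exact: memvf.
by move=> x; rewrite inE => /eqP ->.
Qed.

Lemma mem_Gal_dist_stable (sg : gal_of {:Qn}) h :
  coprime h n -> sg w = w ^+ h -> sg \in 'Gal({:Qn} / F)%g <-> dist_stable G S h.
Proof.
move=> coh sg_w; have [nu nuE] := liftQn sg.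
rewrite mem_Gal_eig -(dist_eigval_fixed nSG coh (lift_unity_exp sg_w nuE)).
split=> fixed i; first by rewrite -eigE -nuE fixed.
by apply: (fmorph_inj QnC); rewrite nuE eigE fixed.
Qed.

Lemma SF_D_img x : SF_D G S x <-> img QnC F x.
Proof.
split.
  apply: field_gen_min; first exact: img_subfield.
  move=> a /(eigenvalue_dist_mx nSG)[i ->]; exists (eig i); rewrite ?eigE //.
  by apply: seqv_sub_adjoin; apply/mapP; exists i; rewrite ?mem_enum.
case=> y Fy ->; apply: (img_adjoin_seq (field_gen_subfield _) _ Fy).
move=> _ /mapP[i _ ->]; apply: field_gen_in; rewrite eigE.
by apply/(eigenvalue_dist_mx nSG); exists i.
Qed.

Lemma img_fullv z : n.-primitive_root z ->
  forall x, img QnC fullv x <-> field_gen (fun a => a = z) x.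
Proof.
move=> prim_z x; split.
  case=> y _ ->; apply: (img_adjoin_seq (field_gen_subfield _) (s := [:: w])).
    move=> a; rewrite inE => /eqP ->.
    have [k ->] := prim_rootP prim_z (prim_expr_order prim_QnC_w).
    by apply: (subfieldX (field_gen_subfield _)); apply: field_gen_in.
  by rewrite adjoin_seq1 genQn memvf.
apply: field_gen_min; first exact: img_subfield.
move=> a ->; have [k ->] := prim_rootP prim_QnC_w (prim_expr_order prim_z).
by exists (w ^+ k); rewrite ?memvf ?rmorphXn.
Qed.

Lemma mem_fixed_Gal y : y \in F <-> forall sg, sg \in 'Gal({:Qn} / F)%g -> sg y = y.
Proof.
have /eqP := galois_fixedField galois_eig_field; rewrite eqEsubv => /andP[sFfix _].
split=> [Fy sg Gal_sg | fixed_y]; first by apply: (fixed_gal _ Gal_sg Fy); apply: subvf.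
by apply: (subvP sFfix); apply/fixedFieldP => //; apply: memvf.
Qed.

(* The default [1] is only reached for [h] not coprime to [n]. *)
Definition gal_of_unit (h : 'I_n) : gal_of {:Qn} :=
  odflt 1%g [pick sg : gal_of {:Qn} | sg w == w ^+ h].

Lemma gal_of_unitE (h : 'I_n) : coprime h n -> gal_of_unit h w = w ^+ h.
Proof.
move=> coh; rewrite /gal_of_unit; case: pickP => [sg /eqP // | no_sg].
by have [sg sg_w] := gal_unity_exp_exists coh; have := no_sg sg; rewrite sg_w eqxx.
Qed.

Lemma gal_of_unit_inj (A : {set 'I_n}) :
  (forall h, h \in A -> coprime h n) -> {in A &, injective gal_of_unit}.
Proof.
move=> coA h1 h2 Ah1 Ah2 eq_sg; apply: val_inj => /=.
have /eqP : w ^+ h1 = w ^+ h2 by rewrite -!gal_of_unitE ?coA // eq_sg.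
by rewrite (eq_prim_root_expr prim_w) !modn_small // => /eqP.
Qed.

Lemma Gal_full_image : 'Gal({:Qn} / 1)%g = gal_of_unit @: [set h : 'I_n | coprime h n].
Proof.
apply/setP => sg; rewrite gal_kHom ?sub1v // k1HomE ahomWin.
apply/esym/imsetP; have [h sg_w coh] := gal_unity_exp sg.
by exists h; rewrite ?inE //; apply: gal_eq_unity; rewrite gal_of_unitE.
Qed.

Lemma distance_integralP :
  distance_integral G S <->
  (forall (i : nat) (h : 'I_n), (1 <= i <= diam G S)%N -> coprime h n ->
     powset (Sdist G S i) h = Sdist G S i).
Proof.
split=> [DI i h di coh | SiJ a eig_a].
  have [u uE] := Qn_aut_exists coh.
  apply: ((Sdist_expg_stable S coh).2 _ i di).
  apply/(dist_eigval_fixed nSG coh uE) => j.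
  have /DI/intrP[m ->] : eigenvalue (dist_mx G S) (dist_eigval S j).
    by apply/(eigenvalue_dist_mx nSG); exists j.
  by rewrite rmorph_int.
have Aint_a := eigenvalue_dist_mx_Aint eig_a.
have [i a_eig] := (eigenvalue_dist_mx nSG a).1 eig_a.
apply: Cint_rat_Aint Aint_a; rewrite a_eig -eigE.
have : eig i \in fixedField 'Gal({:Qn} / 1)%g.
  apply/fixedFieldP; first exact: memvf.
  move=> sg _; have [h sg_w coh] := gal_unity_exp sg.
  apply: ((mem_Gal_eig sg).1 _ i); apply/(mem_Gal_dist_stable coh sg_w).
  by apply/(Sdist_expg_stable S coh) => j dj; apply: SiJ.
have /eqP := galois_fixedField galQn; rewrite eqEsubv => /andP[sfix1 _] /(subvP sfix1).
by case/vlineP => k ->; rewrite rmorphZ_num rmorph1 mulr1 Crat_rat.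
Qed.

Variable H : {set 'I_n}.
Hypothesis memH : forall h, h \in H <-> coprime h n /\ dist_stable G S h.

Lemma Gal_eig_image : 'Gal({:Qn} / F)%g = gal_of_unit @: H.
Proof.
apply/setP => sg; apply/idP/imsetP => [Gal_sg | [h /memH[coh stab_h] ->]].
  have [h sg_w coh] := gal_unity_exp sg; exists h.
    by apply/memH; split=> //; apply/(mem_Gal_dist_stable coh sg_w).
  by apply: gal_eq_unity; rewrite gal_of_unitE.
exact/(mem_Gal_dist_stable coh (gal_of_unitE coh)).
Qed.

Lemma SF_D_fixed z : n.-primitive_root z -> forall x, SF_D G S x <->
  (field_gen (fun a => a = z) x /\
   forall (u : {rmorphism algC -> algC}) (h : 'I_n), h \in H -> u z = z ^+ h -> u x = x).
Proof.
move=> prim_z x; rewrite SF_D_img -(img_fullv prim_z); split.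
  case=> y Fy ->; split; first by exists y; rewrite ?memvf.
  move=> u h /memH[coh stab_h] uz.
  have [sg sg_w] := gal_unity_exp_exists coh; have [nu nuE] := liftQn sg.
  have Gal_sg : sg \in 'Gal({:Qn} / F)%g by apply/(mem_Gal_dist_stable coh sg_w).
  rewrite (@rmorph_eq_on_Qn u nu); first by rewrite -nuE (mem_fixed_Gal y).1.
  have QnC_w_n := prim_expr_order prim_QnC_w.
  by rewrite (rmorph_unity_root prim_z uz QnC_w_n) (lift_unity_exp sg_w nuE QnC_w_n).
case=> -[y _ ->] fixed_x; exists y => //; apply/mem_fixed_Gal => sg Gal_sg.
have [h sg_w coh] := gal_unity_exp sg; have [nu nuE] := liftQn sg.
have Hh : h \in H by apply/memH; split=> //; apply/(mem_Gal_dist_stable coh sg_w).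
have := fixed_x nu h Hh (lift_unity_exp sg_w nuE (prim_expr_order prim_z)).
by rewrite -nuE => /fmorph_inj.
Qed.

Lemma dim_eig_field : \dim F = (totient n %/ #|H|)%N.
Proof.
have cardH : #|'Gal({:Qn} / F)%g| = #|H|.
  by rewrite Gal_eig_image card_in_imset //; apply: gal_of_unit_inj => h /memH[].
have cardU : #|'Gal({:Qn} / 1)%g| = totient n.
  rewrite Gal_full_image card_in_imset; last by apply: gal_of_unit_inj => h; rewrite inE.
  rewrite totient_count_coprime big_mkord cardsE -sum1_card big_mkcond /=.
  apply: eq_bigr => h _; rewrite unfold_in /= coprime_sym /coprime.
  by case: eqnP => [-> | /eqP/negbTE ->].
have H_gt0 : (0 < #|H|)%N by rewrite -cardH cardG_gt0.
have := galois_dim galQn; rewrite dimv1 divn1 => dimQn.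
by rewrite -cardU -dimQn (dim_sup_field (subvf F)) galois_dim // cardH mulKn.
Qed.

Lemma Qdim_SF_D : Qdim (SF_D G S) (totient n %/ #|H|).
Proof.
rewrite -dim_eig_field; exists (fun i => QnC (vbasis F)`_i); split.
- move=> i; apply/SF_D_img; exists (vbasis F)`_i => //.
  by apply: vbasis_mem; apply: mem_nth; rewrite size_tuple.
- move=> c sum0; apply/freeP; first exact: basis_free (vbasisP F).
  apply: (fmorph_inj QnC); rewrite rmorph0 -{}sum0 rmorph_sum.
  by apply: eq_bigr => i _; rewrite rmorphZ_num.
move=> x /SF_D_img[y Fy ->]; exists (fun i => coord (vbasis F) i y).
rewrite {1}(coord_vbasis Fy) rmorph_sum; apply: eq_bigr => i _.
by rewrite rmorphZ_num.
Qed.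

End CyclotomicGalois.

Theorem mainTheorem15 (gT : finGroupType) (G : {group gT}) (S : {set gT}) (z : algC) :
  S \subset G -> (1%g \notin S) ->
  (forall s, s \in S -> (s^-1)%g \in S) ->
  (forall g, g \in G -> (S :^ g)%g = S) ->
  cay_connected G S ->
  (#|G|).-primitive_root z ->
  let n := #|G| in
  let d := diam G S in
  let H' := [set h : 'I_n | coprime h n &&
              [forall i : 'I_d.+1, (0 < i)%N ==> (powset (Sdist G S i) h == Sdist G S i)]] in
  [/\ (forall x : algC, SF_D G S x <->
        (field_gen (fun a => a = z) x /\
         forall (u : {rmorphism algC -> algC}) (h : 'I_n),
           h \in H' -> u z = z ^+ h -> u x = x)),
      Qdim (SF_D G S) (totient n %/ #|H'|)
    & (distance_integral G S <->
        (forall (i : nat) (h : 'I_n), (1 <= i <= d)%N -> coprime h n ->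
           powset (Sdist G S i) h = Sdist G S i))].
Proof.
move=> _ _ _ nSG _ prim_z n d H'.
have [Qn galQn [QnC liftQn [w [prim_w genQn] QnG]]] := group_num_field_exists G.
have [eig eigE] :=
  dist_eigval_num_field S (fun i x Gx => QnG _ G _ (irr_char i) x (order_dvdG Gx)).
have memH' h : h \in H' <-> coprime h n /\ dist_stable G S h :=
  @in_Sdist_stabilizer gT G S h.
split.
- exact: (SF_D_fixed nSG galQn liftQn prim_w genQn eigE memH' prim_z).
- exact: (Qdim_SF_D nSG galQn liftQn prim_w genQn eigE memH').
exact: (distance_integralP nSG galQn liftQn prim_w eigE).
Qed.
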